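(* For generic $a,b\in\mathbb{C}$ define $\mathbf Q_0^{(3)}(n;a;b)=1+\tfrac{3n}{a}$ and, for $k\ge1$, $$a(\tfrac12-k-b)(\tfrac12-k+b)\,\mathbf Q_k^{(3)}(n;a;b)=\frac{3n+2k+a}{2k+a}(n+a)(n+\tfrac12-k-b)(n+\tfrac12-k+b)\,\mathbf Q_{k-1}^{(3)}(n;a+1;b)$$ $$\qquad+8\,\frac{3n-4k+a}{2k+a}\,n\,(n-\tfrac14+\tfrac k2+\tfrac a2+\tfrac b2)(n-\tfrac14+\tfrac k2+\tfrac a2-\tfrac b2)\,\mathbf Q_{k-1}^{(3)}(n-1;a+1;b).$$ Then $\mathbf Q_k^{(3)}$ is a polynomial of degree $1+4k$ in $n$, and for all integers $k\ge0$, near $x=0$, $${}_3F_2\!\left[\begin{matrix}\tfrac13+\tfrac{2k}3+\tfrac a3,\ \tfrac23+\tfrac{2k}3+\tfrac a3,\ 1+\tfrac{2k}3+\tfrac a3\\ \tfrac34+\tfrac k2+\tfrac a2+\tfrac b2,\ \tfrac34+\tfrac k2+\tfrac a2-\tfrac b2\end{matrix}\,\Big|\,-\frac{27x}{(1-4x)^3}\right]$$ $$=(1+8x)^{-1-2k}(1-4x)^{1+2k+a}\sum_{n=0}^\infty\frac{(a)_n(\tfrac12-k-b)_n(\tfrac12-k+b)_n}{n!\,(\tfrac34+\tfrac k2+\tfrac a2+\tfrac b2)_n(\tfrac34+\tfrac k2+\tfrac a2-\tfrac b2)_n}\,\mathbf Q_k^{(3)}(n;a;b)\,x^n.$$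
   Context: $(c)_n$ denotes the Pochhammer symbol, $(c)_0=1$; ${}_pF_q$ is the generalized hypergeometric series. Parameters are generic so that no lower parameter is a nonpositive integer and no division by zero occurs in the recurrence. *)

From HB Require Import structures.
From mathcomp Require Import all_boot all_order all_algebra.
Set Implicit Arguments. Unset Strict Implicit. Unset Printing Implicit Defensive.
Import Order.TTheory GRing.Theory Num.Theory.
Local Open Scope ring_scope.

Definition poch (F : fieldType) (c : F) (n : nat) : F :=
  \prod_(i < n) (c + i%:R).

Definition gbin (F : fieldType) (c : F) (n : nat) : F :=
  (\prod_(i < n) (c - i%:R)) / (n`!)%:R.

Definition fps (F : fieldType) := nat -> F.

Definition fone (F : fieldType) : fps F := fun n => if n == 0%N then 1 else 0.

Definition fmul (F : fieldType) (f g : fps F) : fps F :=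
  fun n => \sum_(i < n.+1) f i * g (n - i)%N.

Definition fpow (F : fieldType) (g : fps F) (m : nat) : fps F :=
  iter m (fmul g) (@fone F).

(* composition f(g(x)), meaningful when g 0 = 0 *)
Definition fcomp (F : fieldType) (f g : fps F) : fps F :=
  fun n => \sum_(m < n.+1) f m * fpow g m n.

(* the binomial series (1 + d x)^c *)
Definition fbinom (F : fieldType) (c d : F) : fps F :=
  fun n => gbin c n * d ^+ n.

Definition fmonX (F : fieldType) (c : F) : fps F :=
  fun n => if n == 1%N then c else 0.

Definition hyp32 (F : fieldType) (u1 u2 u3 l1 l2 : F) : fps F :=
  fun n => poch u1 n * poch u2 n * poch u3 n
           / (poch l1 n * poch l2 n * (n`!)%:R).

Fixpoint Q3 (F : fieldType) (k : nat) (a b n : F) {struct k} : F :=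
  match k with
  | 0%N => 1 + 3 * n / a
  | k'.+1 =>
    let kk : F := (k'.+1)%:R in
    ((3 * n + 2 * kk + a) / (2 * kk + a) * (n + a)
       * (n + 1/2 - kk - b) * (n + 1/2 - kk + b) * Q3 k' (a + 1) b n
     + 8 * ((3 * n - 4 * kk + a) / (2 * kk + a)) * n
       * (n - 1/4 + kk/2 + a/2 + b/2) * (n - 1/4 + kk/2 + a/2 - b/2)
       * Q3 k' (a + 1) b (n - 1))
    / (a * (1/2 - kk - b) * (1/2 - kk + b))
  end.

From HB Require Import structures.
From mathcomp Require Import all_boot all_order all_algebra.
From mathcomp Require Import ring zify.
From Stdlib Require Import FunctionalExtensionality.
Import Order.TTheory GRing.Theory Num.Theory.
Set Implicit Arguments. Unset Strict Implicit. Unset Printing Implicit Defensive.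
Local Open Scope ring_scope.

(* For k = 0 the identity is Bailey's cubic transformation.  Writing u for the
   argument -27x/(1-4x)^3, one has (1 - 4x) theta_x = (1 + 8x) theta_u on functions
   of u, so the third order hypergeometric equation of the 3F2 in u becomes an
   equation in x.  The right-hand side (1-4x)^a * sum is shown to satisfy the same
   equation by a factorisation of the transported operator through the recurrence
   of its coefficients; both sides have constant term 1, and a solution is
   determined by its constant term since the indicial polynomial
   n (n + l1 - 1) (n + l2 - 1) has no positive integer root.
   The induction on k uses contiguity: raising the first numerator parameter of
   the 3F2 by one is the operator 1 + theta/c, and the recurrence defining Q_k is
   precisely the corresponding relation between the summands for (k + 1, a) and
   (k, a + 1).  Polynomiality of Q_k follows from the same recurrence by tracking
   degrees and leading coefficients. *)

Section PowerSeries.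
Variable F : fieldType.
Implicit Types f g h : fps F.

Definition fzero : fps F := fun _ => 0.
Definition fadd f g : fps F := fun n => f n + g n.
Definition fscale (c : F) f : fps F := fun n => c * f n.
Definition fmulX f : fps F := fun n => if n is m.+1 then f m else 0.
Definition ftheta f : fps F := fun n => n%:R * f n.
Definition fmul1X (d : F) f : fps F := fadd f (fscale d (fmulX f)).
Definition fmul1Xn (d : F) (k : nat) f : fps F := iter k (fmul1X d) f.

(* Truncation reduces the ring laws of [fmul] to those of [{poly F}]. *)
Definition ftrunc (n : nat) f : {poly F} := \poly_(i < n.+1) f i.

Lemma fmul_coef_trunc n f g : fmul f g n = (ftrunc n f * ftrunc n g)`_n.
Proof.
rewrite coefM /fmul; apply: eq_bigr => i _.
by rewrite /ftrunc !coef_poly ltnS leq_ord ltnS leq_subr.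
Qed.

Lemma coefM_eq_low n (p p' q q' : {poly F}) :
  (forall i, (i <= n)%N -> p`_i = p'`_i) ->
  (forall i, (i <= n)%N -> q`_i = q'`_i) -> (p * q)`_n = (p' * q')`_n.
Proof.
move=> epp' eqq'; rewrite !coefM; apply: eq_bigr => i _.
by rewrite epp' ?eqq' ?leq_subr //; exact: ltn_ord i.
Qed.

Lemma coef_trunc_fmul n f g i :
  (i <= n)%N -> (ftrunc n (fmul f g))`_i = (ftrunc n f * ftrunc n g)`_i.
Proof.
move=> le_in; rewrite /ftrunc coef_poly ltnS le_in fmul_coef_trunc.
by apply: coefM_eq_low => j le_ji; rewrite !coef_poly !ltnS le_ji (leq_trans le_ji).
Qed.

Lemma fmulC f g : fmul f g = fmul g f.
Proof. by apply: functional_extensionality => n; rewrite !fmul_coef_trunc mulrC. Qed.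

Lemma fmulA f g h : fmul f (fmul g h) = fmul (fmul f g) h.
Proof.
apply: functional_extensionality => n; rewrite !fmul_coef_trunc.
rewrite (coefM_eq_low (p' := ftrunc n f) (q' := ftrunc n g * ftrunc n h)) //;
  last exact: coef_trunc_fmul.
rewrite [RHS](coefM_eq_low (p' := ftrunc n f * ftrunc n g) (q' := ftrunc n h)) //;
  last exact: coef_trunc_fmul.
by rewrite mulrA.
Qed.

Lemma fmul1 f : fmul (@fone F) f = f.
Proof.
apply: functional_extensionality => n; rewrite /fmul big_ord_recl /fone /= mul1r subn0.
by rewrite big1 ?addr0 // => i _; rewrite mul0r.
Qed.

Lemma fmulr0 f : fmul f fzero = fzero.
Proof.
by apply: functional_extensionality => n; rewrite /fmul big1 // => i _; rewrite mulr0.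
Qed.

Lemma fmulDr f g h : fmul f (fadd g h) = fadd (fmul f g) (fmul f h).
Proof.
apply: functional_extensionality => n; rewrite /fmul /fadd -big_split /=.
by apply: eq_bigr => i _; rewrite mulrDr.
Qed.

Lemma fmulZr f c g : fmul f (fscale c g) = fscale c (fmul f g).
Proof.
apply: functional_extensionality => n; rewrite /fmul /fscale mulr_sumr.
by apply: eq_bigr => i _; rewrite mulrCA.
Qed.

Lemma fmulXr f g : fmul f (fmulX g) = fmulX (fmul f g).
Proof.
apply: functional_extensionality => -[|n]; rewrite /fmul /fmulX.
  by rewrite big_ord1 mulr0.
rewrite big_ord_recr /= subnn mulr0 addr0.
by apply: eq_bigr => i _; rewrite subSn // -ltnS.
Qed.

Lemma fmul1Xr f d g : fmul f (fmul1X d g) = fmul1X d (fmul f g).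
Proof. by rewrite /fmul1X fmulDr fmulZr fmulXr. Qed.

Lemma fmulZl c f g : fmul (fscale c f) g = fscale c (fmul f g).
Proof. by rewrite fmulC fmulZr fmulC. Qed.

Lemma fmulXl f g : fmul (fmulX f) g = fmulX (fmul f g).
Proof. by rewrite fmulC fmulXr fmulC. Qed.

Lemma fmul1Xl d f g : fmul (fmul1X d f) g = fmul1X d (fmul f g).
Proof. by rewrite fmulC fmul1Xr fmulC. Qed.

Lemma fmul1XD d f g : fmul1X d (fadd f g) = fadd (fmul1X d f) (fmul1X d g).
Proof.
apply: functional_extensionality => -[|n]; rewrite /fmul1X /fadd /fscale /fmulX; ring.
Qed.

Lemma fmul1XZ d c f : fmul1X d (fscale c f) = fscale c (fmul1X d f).
Proof.
apply: functional_extensionality => -[|n]; rewrite /fmul1X /fadd /fscale /fmulX; ring.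
Qed.

Lemma fmul1XX d f : fmul1X d (fmulX f) = fmulX (fmul1X d f).
Proof.
apply: functional_extensionality => -[|n]; rewrite /fmul1X /fadd /fscale /fmulX; ring.
Qed.

Lemma fmul1X0 d : fmul1X d fzero = fzero.
Proof.
by apply: functional_extensionality => -[|n];
  rewrite /fmul1X /fadd /fscale /fmulX /fzero mulr0 addr0.
Qed.

Lemma fthetaM f g : ftheta (fmul f g) = fadd (fmul (ftheta f) g) (fmul f (ftheta g)).
Proof.
apply: functional_extensionality => n; rewrite /ftheta /fmul /fadd -big_split /=.
rewrite mulr_sumr; apply: eq_bigr => i _.
by rewrite -{1}(subnKC (ltn_ord i : (i <= n)%N)) natrD; ring.
Qed.

Lemma fthetaX f : ftheta (fmulX f) = fadd (fmulX (ftheta f)) (fmulX f).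
Proof.
apply: functional_extensionality => -[|n]; rewrite /ftheta /fmulX /fadd.
  by rewrite mulr0 addr0.
by rewrite -addn1 natrD; ring.
Qed.

Lemma fthetaD f g : ftheta (fadd f g) = fadd (ftheta f) (ftheta g).
Proof. by apply: functional_extensionality => n; rewrite /ftheta /fadd mulrDr. Qed.

Lemma fthetaZ c f : ftheta (fscale c f) = fscale c (ftheta f).
Proof. by apply: functional_extensionality => n; rewrite /ftheta /fscale mulrCA. Qed.

Lemma fmulX_inj : injective fmulX.
Proof.
by move=> f g efg; apply: functional_extensionality => n; apply: (congr1 (fun u => u n.+1) efg).
Qed.

Lemma fscale_inj c : c != 0 -> injective (fscale c).
Proof.
move=> c_neq0 f g efg; apply: functional_extensionality => n.
by apply: (mulfI c_neq0); apply: (congr1 (fun u => u n) efg).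
Qed.

End PowerSeries.

Tactic Notation "fps_ext" ident(n) :=
  apply: functional_extensionality => n; rewrite /fmul1X /fadd /fscale /fmulX /ftheta.

Lemma natr_nz (F : fieldType) : [pchar F] =i pred0 -> forall n, (0 < n)%N -> n%:R != 0 :> F.
Proof. by move=> hchar n; rewrite ((pcharf0P F).1 hchar) -lt0n. Qed.

Lemma fact_nz (F : fieldType) : [pchar F] =i pred0 -> forall n, (n`!)%:R != 0 :> F.
Proof. by move=> hchar n; rewrite natr_nz ?fact_gt0. Qed.

Section Binomial.
Variable F : fieldType.
Hypothesis hchar : [pchar F] =i pred0.
Implicit Types f g Y Z : fps F.
Implicit Types c d e : F.

(* [(1 + d x) theta Y = c d x Y], the differential equation of [(1 + d x)^c]. *)
Definition binom_ode c d Y := fmul1X d (ftheta Y) = fscale (c * d) (fmulX Y).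

Lemma gbin0 c : gbin c 0 = 1.
Proof. by rewrite /gbin big_ord0 fact0 divr1. Qed.

Lemma gbinS c n : gbin c n.+1 * n.+1%:R = gbin c n * (c - n%:R).
Proof.
rewrite /gbin big_ord_recr /= factS natrM.
by field; rewrite fact_nz // -mulrS natr_nz.
Qed.

Lemma fbinom_ode c d : binom_ode c d (fbinom c d).
Proof.
fps_ext n; case: n => [|n]; first by rewrite /fbinom mul0r !mulr0 addr0.
by rewrite /fbinom exprS mulrA (mulrC _%:R) gbinS; ring.
Qed.

Lemma fbinom_coef0 c d : fbinom c d 0 = 1.
Proof. by rewrite /fbinom gbin0 mulr1. Qed.

Lemma binom_ode_uniq c d Y Z : binom_ode c d Y -> binom_ode c d Z -> Y 0 = Z 0 -> Y = Z.
Proof.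
move=> odeY odeZ eYZ0; apply: functional_extensionality; elim=> // n IH.
have := congr1 (fun u => u n.+1) odeY; have := congr1 (fun u => u n.+1) odeZ.
rewrite /fmul1X /fadd /fscale /ftheta /fmulX /= IH => eZ eY.
apply: (mulIf (natr_nz hchar (ltn0Sn n))); rewrite mulrC [RHS]mulrC.
by apply: (addIr (d * (n%:R * Z n))); rewrite eY eZ.
Qed.

Lemma binom_odeM c e d Y Z :
  binom_ode c d Y -> binom_ode e d Z -> binom_ode (c + e) d (fmul Y Z).
Proof.
rewrite /binom_ode => odeY odeZ.
rewrite fthetaM fmul1XD -fmul1Xl odeY -fmul1Xr odeZ fmulZl fmulZr fmulXl fmulXr.
by fps_ext n; ring.
Qed.

Lemma fbinomD c e d : fmul (fbinom c d) (fbinom e d) = fbinom (c + e) d.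
Proof.
apply: (binom_ode_uniq (binom_odeM (fbinom_ode c d) (fbinom_ode e d))).
  exact: fbinom_ode.
by rewrite /fmul big_ord1 !fbinom_coef0 mulr1.
Qed.

Lemma fbinom0 d : fbinom 0 d = @fone F.
Proof.
apply: (binom_ode_uniq (fbinom_ode 0 d)); last by rewrite fbinom_coef0.
by fps_ext n; rewrite /fone; case: n => [|[|n]] /=; ring.
Qed.

Lemma fbinom1 d : fbinom 1 d = fmul1X d (@fone F).
Proof.
apply: (binom_ode_uniq (fbinom_ode 1 d)).
  by fps_ext n; rewrite /fone; case: n => [|[|[|n]]] /=; ring.
by rewrite fbinom_coef0 /fmul1X /fadd /fscale /fmulX /fone /= mulr0 addr0.
Qed.

Lemma fmul1X_fbinom c d : fmul1X d (fbinom c d) = fbinom (c + 1) d.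
Proof. by rewrite -fbinomD fbinom1 fmul1Xr fmulC fmul1. Qed.

Lemma fmul_fbinomS c d f : fmul (fbinom (c + 1) d) f = fmul1X d (fmul (fbinom c d) f).
Proof. by rewrite -fmul1X_fbinom fmul1Xl. Qed.

Lemma fmul_fbinom_inj c d : injective (fmul (fbinom c d)).
Proof.
move=> f g /(congr1 (fmul (fbinom (- c) d))).
by rewrite !fmulA fbinomD addNr fbinom0 !fmul1.
Qed.

Lemma fmul1X_inj d : injective (fmul1X d).
Proof.
move=> f g efg; apply: (@fmul_fbinom_inj 1 d).
by rewrite fbinom1 !fmul1Xl !fmul1 efg.
Qed.

Lemma ftheta_fbinom c d : ftheta (fbinom c d) = fscale (c * d) (fmulX (fbinom (c - 1) d)).
Proof.
apply: (@fmul1X_inj d); rewrite fbinom_ode.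
by rewrite fmul1XZ fmul1XX fmul1X_fbinom subrK.
Qed.

End Binomial.

Section Composition.
Variable F : fieldType.
Implicit Types f h Y Z : fps F.
Variable g : fps F.
Hypothesis g0 : g 0 = 0.

Lemma fpowS m : fpow g m.+1 = fmul g (fpow g m).
Proof. by []. Qed.

Lemma fpow_small m n : (n < m)%N -> fpow g m n = 0.
Proof.
elim: m n => // m IH n lt_nm; rewrite fpowS /fmul big1 // => -[[|i] lt_in] _ /=.
  by rewrite g0 mul0r.
by rewrite IH ?mulr0 //; lia.
Qed.

(* Only the terms [f m g^m] with [m < K] contribute below degree [K]. *)
Definition fcomp_trunc (K : nat) f : fps F := fun n => \sum_(m < K) f m * fpow g m n.

Lemma fcomp_truncE K f n : (n < K)%N -> fcomp f g n = fcomp_trunc K f n.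
Proof.
move=> lt_nK; rewrite /fcomp /fcomp_trunc -(subnKC lt_nK) big_split_ord /=.
rewrite [X in _ = _ + X]big1 ?addr0 // => i _.
by rewrite -fpowS fpow_small ?mulr0 // ltnS leq_addr.
Qed.

Lemma fmul_eq_low h Y Z n :
  (forall i, (i <= n)%N -> Y i = Z i) -> fmul h Y n = fmul h Z n.
Proof. by move=> eYZ; apply: eq_bigr => i _; rewrite eYZ // leq_subr. Qed.

Lemma fmul_sumr h K (c : nat -> F) (S : nat -> fps F) :
  fmul h (fun n => \sum_(m < K) c m * S m n) = fun n => \sum_(m < K) c m * fmul h (S m) n.
Proof.
apply: functional_extensionality => n; rewrite /fmul.
under eq_bigr do rewrite mulr_sumr.
rewrite exchange_big /=; apply: eq_bigr => m _; rewrite mulr_sumr.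
by apply: eq_bigr => i _; rewrite mulrCA.
Qed.

Lemma fcompD f f' : fcomp (fadd f f') g = fadd (fcomp f g) (fcomp f' g).
Proof.
apply: functional_extensionality => n; rewrite /fcomp /fadd -big_split /=.
by apply: eq_bigr => i _; rewrite mulrDl.
Qed.

Lemma fcompZ c f : fcomp (fscale c f) g = fscale c (fcomp f g).
Proof.
apply: functional_extensionality => n; rewrite /fcomp /fscale mulr_sumr.
by apply: eq_bigr => i _; rewrite mulrA.
Qed.

Lemma fcompX f : fcomp (fmulX f) g = fmul g (fcomp f g).
Proof.
apply: functional_extensionality => n.
rewrite (@fmul_eq_low g _ (fcomp_trunc n.+1 f) n) => [|i le_in]; last first.
  by apply: fcomp_truncE; rewrite ltnS.
rewrite /fcomp_trunc fmul_sumr /fcomp big_ord_recl /= mul0r add0r big_ord_recr /=.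
by rewrite -fpowS fpow_small ?mulr0 ?addr0.
Qed.

Lemma fmul_ftheta_fpow m : fmul g (ftheta (fpow g m)) = fscale m%:R (fmul (ftheta g) (fpow g m)).
Proof.
elim: m => [|m IH].
  fps_ext n; rewrite mul0r /fpow /= /fmul big1 // => i _.
  by rewrite /fone; case: (n - i)%N => [|j] /=; rewrite !(mul0r, mulr0).
rewrite fpowS fthetaM fmulDr IH fmulZr.
rewrite (fmulA g (ftheta g)) (fmulC g (ftheta g)) -fmulA.
by fps_ext n; rewrite mulrSr; ring.
Qed.

Lemma fcomp_chain f : fmul g (ftheta (fcomp f g)) = fmul (ftheta g) (fcomp (ftheta f) g).
Proof.
apply: functional_extensionality => n.
rewrite (@fmul_eq_low g _ (fun i => \sum_(m < n.+1) f m * ftheta (fpow g m) i) n); last first.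
  move=> i le_in; rewrite /ftheta (fcomp_truncE (K := n.+1)) ?ltnS // mulr_sumr.
  by apply: eq_bigr => m _; rewrite mulrCA.
rewrite (@fmul_eq_low (ftheta g) _ (fcomp_trunc n.+1 (ftheta f)) n); last first.
  by move=> i le_in; apply: fcomp_truncE; rewrite ltnS.
rewrite (fmul_sumr g n.+1 f (fun m => ftheta (fpow g m))) fmul_sumr; apply: eq_bigr => m _.
by rewrite fmul_ftheta_fpow /fscale /ftheta mulrA (mulrC (f m)).
Qed.

Lemma fcomp_coef0 f : fcomp f g 0 = f 0.
Proof. by rewrite /fcomp big_ord1 /fpow /fone /= mulr1. Qed.

End Composition.

Section CubicArgument.
Variable F : fieldType.
Hypothesis hchar : [pchar F] =i pred0.
Implicit Types f Y : fps F.

Definition cubic_arg : fps F := fmul (fmonX (-27)) (fbinom (-3) (-4)).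

Lemma cubic_argE : cubic_arg = fscale (-27) (fmulX (fbinom (-3) (-4))).
Proof.
rewrite /cubic_arg; have -> : fmonX (-27) = fscale (-27) (fmulX (@fone F)).
  by fps_ext n; rewrite /fmonX /fone; case: n => [|[|n]] /=; ring.
by rewrite fmulZl fmulXl fmul1.
Qed.

Lemma cubic_arg0 : cubic_arg 0 = 0.
Proof. by rewrite cubic_argE /fscale /fmulX mulr0. Qed.

Lemma ftheta_cubic_arg : fmul1X (-4) (ftheta cubic_arg) = fmul1X 8 cubic_arg.
Proof.
rewrite cubic_argE fthetaZ fthetaX ftheta_fbinom //.
have -> : fbinom (-3) (-4) = fmul1X (-4) (fbinom (-3 - 1) (-4)) :> fps F.
  by rewrite fmul1X_fbinom // subrK.
by fps_ext n; case: n => [|[|[|n]]] /=; ring.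
Qed.

Lemma fmul_cubic_arg_inj : injective (fmul cubic_arg).
Proof.
have n27 : -27 != 0 :> F by rewrite oppr_eq0 natr_nz.
move=> f f'; rewrite cubic_argE !fmulZl !fmulXl.
by move=> /(fscale_inj n27) /fmulX_inj /fmul_fbinom_inj; apply.
Qed.

Lemma ftheta_fcomp_cubic_arg f :
  fmul1X (-4) (ftheta (fcomp f cubic_arg)) = fmul1X 8 (fcomp (ftheta f) cubic_arg).
Proof.
apply: fmul_cubic_arg_inj.
by rewrite fmul1Xr fcomp_chain ?cubic_arg0 // -fmul1Xl ftheta_cubic_arg fmul1Xl fmul1Xr.
Qed.

End CubicArgument.

Lemma neq0_scaled (F : fieldType) (x y c : F) : c != 0 -> x = c * y -> y != 0 -> x != 0.
Proof. by move=> c_nz -> y_nz; rewrite mulf_neq0. Qed.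

(* The nonvanishing side conditions left by [field] below are, up to a constant
   factor, hypotheses of the context. *)
Ltac nz_const hchar := rewrite ?oner_neq0 ?oppr_eq0 ?(natr_nz hchar) //.
Ltac nz_scaled hchar H :=
  match type of H with is_true (?y != 0) =>
    let T := type of y in
    let scale_by c := apply: (neq0_scaled (c := c) _ _ H);
                      [by nz_const hchar | by field; nz_const hchar] in
    first [ scale_by (1 : T) | scale_by (2 : T) | scale_by (-2 : T) | scale_by (-1 : T)
          | scale_by (4 : T) | scale_by (-4 : T) | scale_by (8 : T) | scale_by (-8 : T)
          | scale_by (16 : T) | scale_by (-16 : T) | scale_by (32 : T) | scale_by (-32 : T)
          | scale_by (3 : T) | scale_by (6 : T) ]
  end.
Ltac field_nz hchar := repeat (apply/andP; split);
  first [ by nz_const hchar | match goal with H : is_true (_ != 0) |- _ => nz_scaled hchar H end ].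

Section Hypergeometric.
Variable F : fieldType.
Hypothesis hchar : [pchar F] =i pred0.

Lemma pochS (c : F) n : poch c n.+1 = poch c n * (c + n%:R).
Proof. by rewrite /poch big_ord_recr. Qed.

Lemma pochSl (c : F) n : poch c n.+1 = c * poch (c + 1) n.
Proof.
rewrite /poch big_ord_recl /= addr0; congr (_ * _); apply: eq_bigr => i _.
by rewrite /bump /= natrD addrA.
Qed.

Lemma poch_nz (c : F) : (forall m : nat, c + m%:R != 0) -> forall n, poch c n != 0.
Proof. by move=> c_nz n; apply/prodf_neq0 => i _; apply: c_nz. Qed.

Lemma hyp32_rot (u1 u2 u3 l1 l2 : F) : hyp32 u1 u2 u3 l1 l2 = hyp32 u3 u1 u2 l1 l2.
Proof. by apply: functional_extensionality => n; rewrite /hyp32 [_ * poch u3 n]mulrC mulrA. Qed.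

Lemma hyp32_contiguous (c u2 u3 l1 l2 : F) : c != 0 ->
  hyp32 (c + 1) u2 u3 l1 l2 =
  fadd (hyp32 c u2 u3 l1 l2) (fscale c^-1 (ftheta (hyp32 c u2 u3 l1 l2))).
Proof.
move=> c_nz; fps_ext n; rewrite /hyp32.
have -> : poch (c + 1) n = poch c n * (c + n%:R) / c by rewrite -pochS pochSl mulrC mulKf.
(* Abstracting the denominator spares [field] a nonvanishing side condition. *)
set den := (poch l1 n * poch l2 n * (n`!)%:R)^-1.
by field.
Qed.

Lemma fcomp_hyp32_contiguous (c u2 u3 l1 l2 : F) : c != 0 ->
  let H := fcomp (hyp32 c u2 u3 l1 l2) (cubic_arg F) in
  fmul1X 8 (fcomp (hyp32 (c + 1) u2 u3 l1 l2) (cubic_arg F)) =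
  fadd (fmul1X 8 H) (fscale c^-1 (fmul1X (-4) (ftheta H))).
Proof.
move=> c_nz H; rewrite hyp32_contiguous // fcompD fcompZ ftheta_fcomp_cubic_arg //.
by rewrite fmul1XD fmul1XZ.
Qed.

End Hypergeometric.

Section OperatorNormalForm.
Variable F : fieldType.
Hypothesis hchar : [pchar F] =i pred0.
Implicit Types T U : fps F.

Definition fmulXn (i : nat) T : fps F := iter i (@fmulX F) T.

(* [opnf c T] applies the operator [sum_i c_i(theta) x^i] to [T]; every operator below
   with polynomial coefficients is brought to this normal form. *)
Definition opnf (c : nat -> F -> F) T : fps F :=
  fun n => \sum_(i < n.+1) c i n%:R * fmulXn i T n.

Definition c_id : nat -> F -> F := fun i _ => if i is 0%N then 1 else 0.

Lemma opnf_id T : T = opnf c_id T.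
Proof.
apply: functional_extensionality => n; rewrite /opnf big_ord_recl /= mul1r.
by rewrite big1 ?addr0 // => i _; rewrite mul0r.
Qed.

Lemma eq_opnf c c' T : (forall i x, c i x = c' i x) -> opnf c T = opnf c' T.
Proof.
by move=> ecc'; apply: functional_extensionality => n; apply: eq_bigr => i _; rewrite ecc'.
Qed.

Lemma ftheta_opnf c T : ftheta (opnf c T) = opnf (fun i x => x * c i x) T.
Proof.
apply: functional_extensionality => n; rewrite /ftheta /opnf mulr_sumr.
by apply: eq_bigr => i _; rewrite mulrA.
Qed.

Lemma fmulX_opnf c T : fmulX (opnf c T) = opnf (fun i x => if i is j.+1 then c j (x - 1) else 0) T.
Proof.
apply: functional_extensionality => -[|n]; rewrite /fmulX /opnf.
  by rewrite big_ord1 mul0r.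
rewrite [RHS]big_ord_recl /= mul0r add0r; apply: eq_bigr => i _.
by rewrite mulrS addrC addrK.
Qed.

Lemma fadd_opnf c c' T : fadd (opnf c T) (opnf c' T) = opnf (fun i x => c i x + c' i x) T.
Proof.
apply: functional_extensionality => n; rewrite /fadd /opnf -big_split /=.
by apply: eq_bigr => i _; rewrite mulrDl.
Qed.

Lemma fscale_opnf a c T : fscale a (opnf c T) = opnf (fun i x => a * c i x) T.
Proof.
apply: functional_extensionality => n; rewrite /fscale /opnf mulr_sumr.
by apply: eq_bigr => i _; rewrite mulrA.
Qed.

Lemma fmul1X_opnf d c T :
  fmul1X d (opnf c T) = opnf (fun i x => c i x + (if i is j.+1 then d * c j (x - 1) else 0)) T.
Proof.
rewrite /fmul1X fmulX_opnf fscale_opnf fadd_opnf.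
by apply: eq_opnf => -[|i] x /=; rewrite ?mulr0.
Qed.

(* [(1 - 4x) theta ((1 + 8x)^e (1 - 4x)^A U) = (1 + 8x)^(e-1) (1 - 4x)^A twisted_theta e A U],
   see [ftheta_prefactor]. *)
Definition twisted_theta (e A : F) U : fps F :=
  fadd (fadd (fmul1X 8 (fmul1X (-4) (ftheta U))) (fscale (8 * e) (fmulX (fmul1X (-4) U))))
       (fscale (-4 * A) (fmulX (fmul1X 8 U))).

Variables A b : F.

(* [theta (theta + l1 - 1) (theta + l2 - 1) = theta^3 + s1 theta^2 + s2 theta] for the lower
   parameters [l1, l2 = 3/4 + A/2 +- b/2];
   [theta^3 + q2 theta^2 + q1 theta + q0 = (theta + A/3) (theta + (A+1)/3) (theta + (A+2)/3)];
   [theta^3 + r1 theta^2 + r2 theta + r3 = (theta + A) (theta + 1/2 - b) (theta + 1/2 + b)]. *)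
Definition s1 := A - 1/2.
Definition s2 := (A/2 - 1/4) * (A/2 - 1/4) - 1/4 * b^+2.
Definition q2 := A + 1.
Definition q1 := (3 * A^+2 + 6 * A + 2) / 9.
Definition q0 := A * (A + 1) * (A + 2) / 27.
Definition r1 := A + 1.
Definition r2 := A + 1/4 - b^+2.
Definition r3 := A * (1/4 - b^+2).

Definition lower_op T := fadd (ftheta (ftheta (ftheta T)))
  (fadd (fscale s1 (ftheta (ftheta T))) (fscale s2 (ftheta T))).
Definition upper_op_hyp T := fadd (ftheta (ftheta (ftheta T)))
  (fadd (fscale q2 (ftheta (ftheta T))) (fadd (fscale q1 (ftheta T)) (fscale q0 T))).
Definition upper_op_sum T := fadd (ftheta (ftheta (ftheta T)))
  (fadd (fscale r1 (ftheta (ftheta T))) (fadd (fscale r2 (ftheta T)) (fscale r3 T))).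

Definition sum_op T := fadd (lower_op T) (fscale (-1) (fmulX (upper_op_sum T))).

Fixpoint twist (j : nat) T : fps F :=
  if j is j'.+1 then twisted_theta (-2 * j'%:R) A (twist j' T) else T.

Lemma twistS j T : twist j.+1 T = twisted_theta (-2 * j%:R) A (twist j T).
Proof. by []. Qed.

Definition cubic_lower_op T := fadd (twist 3 T)
  (fadd (fscale s1 (fmul1Xn 8 2 (twist 2 T))) (fscale s2 (fmul1Xn 8 4 (twist 1 T)))).
Definition cubic_upper_op T := fadd (twist 3 T)
  (fadd (fscale q2 (fmul1Xn 8 2 (twist 2 T)))
        (fadd (fscale q1 (fmul1Xn 8 4 (twist 1 T))) (fscale q0 (fmul1Xn 8 6 T)))).
Definition cubic_op T :=
  fadd (fmul1Xn (-4) 3 (cubic_lower_op T)) (fscale 27 (fmulX (cubic_upper_op T))).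

(* Coefficients of the normal forms of [twist j], [cubic_lower_op], [cubic_upper_op],
   [cubic_op], [sum_op] and [(1 + 8x)^5 sum_op], obtained by expanding the operators;
   the lemmas below check every entry with [field]. *)
Definition c_twist1 : nat -> F -> F := fun i x => match i with
  | 0%N => (1 * x)
  | 1%N => (- 4) + (- 4 * A) + (4 * x)
  | 2%N => (64) + (- 32 * A) + (- 32 * x)
  | _ => 0 end.

Definition c_twist2 : nat -> F -> F := fun i x => match i with
  | 0%N => (1 * x^+2)
  | 1%N => (20) + (4 * A) + (- 28 * x) + (- 8 * x * A) + (8 * x^+2)
  | 2%N => (- 96) + (176 * A) + (16 * A^+2) + (144 * x) + (- 96 * x * A) + (- 48 * x^+2)
  | 3%N => (- (2^+7 * 3^+3)) + (128 * A) + (256 * A^+2) + ((2^+7 * 3^+1 * 5) * x) + (- 256 * x^+2)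
  | 4%N => (2^+14) + (- 2^+13 * A) + (2^+10 * A^+2) + (- 2^+13 * x) + (2^+11 * x * A)
      + (2^+10 * x^+2)
  | _ => 0 end.

Definition c_twist3 : nat -> F -> F := fun i x => match i with
  | 0%N => (1 * x^+3)
  | 1%N => (- 36) + (- 4 * A) + (96 * x) + (12 * x * A) + (- 72 * x^+2) + (- 12 * x^+2 * A)
      + (12 * x^+3)
  | 2%N => (- (2^+5 * 3^+1 * 13)) + (- 784 * A) + (- 48 * A^+2) + (816 * x) + (816 * x * A)
      + (48 * x * A^+2) + (- 192 * x^+2 * A) + (- 48 * x^+3)
  | 3%N => ((2^+7 * 3^+5)) + (- (2^+6 * 3^+1 * 43) * A) + (- (2^+8 * 3^+2) * A^+2)
      + (- 64 * A^+3) + (- (2^+6 * 3^+2 * 49) * x) + ((2^+7 * 3^+3) * x * A) + (960 * x * A^+2)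
      + ((2^+7 * 3^+2 * 7) * x^+2) + (- 192 * x^+2 * A) + (- 704 * x^+3)
  | 4%N => ((2^+11 * 3^+2 * 5)) + ((2^+9 * 209) * A) + (- (2^+11 * 3^+2) * A^+2)
      + (- (2^+9 * 3^+1) * A^+3) + (- (2^+9 * 3^+1 * 7) * x) + (- (2^+10 * 3^+1 * 19) * x * A)
      + ((2^+9 * 3^+2) * x * A^+2) + (- (2^+10 * 3^+2) * x^+2) + ((2^+9 * 3^+1 * 5) * x^+2 * A)
      + ((2^+9 * 3^+1) * x^+3)
  | 5%N => (- (2^+12 * 3^+1 * 205)) + ((2^+15 * 17) * A) + ((2^+14 * 3^+1) * A^+2)
      + (- (2^+12 * 3^+1) * A^+3) + ((2^+13 * 3^+1 * 53) * x) + (- (2^+13 * 3^+1 * 7) * x * A)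
      + (- (2^+12 * 3^+1) * x * A^+2) + (- (2^+13 * 3^+3) * x^+2) + ((2^+12 * 3^+1) * x^+2 * A)
      + ((2^+12 * 3^+1) * x^+3)
  | 6%N => ((2^+18 * 3^+3)) + (- (2^+17 * 3^+3) * A) + ((2^+16 * 3^+2) * A^+2)
      + (- 2^+15 * A^+3) + (- (2^+17 * 3^+3) * x) + ((2^+17 * 3^+2) * x * A)
      + (- (2^+15 * 3^+1) * x * A^+2) + ((2^+16 * 3^+2) * x^+2) + (- (2^+15 * 3^+1) * x^+2 * A)
      + (- 2^+15 * x^+3)
  | _ => 0 end.

Definition c_cubic_lower : nat -> F -> F := fun i x => match i with
  | 0%N => ((1 / 16) * x) + (- (1 / 4) * x * b^+2) + (- (1 / 4) * x * A) + ((1 / 4) * x * A^+2)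
      + (- (1 / 2) * x^+2) + (1 * x^+2 * A) + (1 * x^+3)
  | 1%N => (- (225 / 4)) + (9 * b^+2) + ((155 / 4) * A) + (1 * A * b^+2) + (- 4 * A^+2)
      + (- 1 * A^+3) + ((513 / 4) * x) + (- 9 * x * b^+2) + (- 53 * x * A) + (1 * x * A^+2)
      + (- 84 * x^+2) + (12 * x^+2 * A) + (12 * x^+3)
  | 2%N => (- (2^+2 * 3^+3 * 17)) + (240 * b^+2) + (318 * A) + (40 * A * b^+2) + (112 * A^+2)
      + (- 24 * A^+3) + ((2^+1 * 3^+1 * 209) * x) + (- 120 * x * b^+2) + (- 8 * x * A)
      + (- 56 * x * A^+2) + (- 72 * x^+2) + (- 48 * x^+2 * A) + (- 48 * x^+3)
  | 3%N => ((2^+5 * 3^+1 * 325)) + ((2^+7 * 3^+1 * 5) * b^+2) + (- (2^+5 * 329) * A)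
      + (640 * A * b^+2) + ((2^+7 * 3^+1 * 5) * A^+2) + (- 192 * A^+3) + (- (2^+5 * 907) * x)
      + (- 640 * x * b^+2) + ((2^+7 * 3^+2 * 5) * x * A) + (- 448 * x * A^+2)
      + ((2^+7 * 65) * x^+2) + (- 704 * x^+2 * A) + (- 704 * x^+3)
  | 4%N => ((2^+14 * 3^+2)) + (- (2^+8 * 53) * A) + ((2^+10 * 5) * A * b^+2) + (2^+10 * A^+2)
      + (- 512 * A^+3) + (- (2^+12 * 3^+2) * x) + (- 2^+12 * x * A) + (512 * x * A^+2)
      + (- (2^+11 * 3^+1) * x^+2) + ((2^+9 * 3^+1) * x^+2 * A) + ((2^+9 * 3^+1) * x^+3)
  | 5%N => (- (2^+10 * 3^+2 * 265)) + (- (2^+12 * 3^+1 * 5) * b^+2) + ((2^+10 * 3^+1 * 145) * A)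
      + ((2^+12 * 5) * A * b^+2) + (- (2^+13 * 5) * A^+2) + ((2^+10 * 3^+1 * 419) * x)
      + ((2^+12 * 3^+1) * x * b^+2) + (- (2^+12 * 37) * x * A) + (2^+13 * x * A^+2)
      + (- (2^+13 * 3^+3) * x^+2) + ((2^+12 * 3^+1) * x^+2 * A) + ((2^+12 * 3^+1) * x^+3)
  | 6%N => ((2^+14 * 3^+1 * 121)) + (- (2^+16 * 3^+1) * b^+2) + (- (2^+13 * 121) * A)
      + (2^+15 * A * b^+2) + (- (2^+13 * 385) * x) + (2^+15 * x * b^+2) + ((2^+15 * 11) * x * A)
      + ((2^+15 * 17) * x^+2) + (- 2^+15 * x^+2 * A) + (- 2^+15 * x^+3)
  | _ => 0 end.

Definition c_cubic_upper : nat -> F -> F := fun i x => match i with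
  | 0%N => ((2 / 27) * A) + ((1 / 9) * A^+2) + ((1 / 27) * A^+3) + ((2 / 9) * x)
      + ((2 / 3) * x * A) + ((1 / 3) * x * A^+2) + (1 * x^+2) + (1 * x^+2 * A) + (1 * x^+3)
  | 1%N => (- 8) + ((44 / 3) * A) + (- (16 / 3) * A^+2) + ((4 / 9) * A^+3) + (44 * x)
      + (- 32 * x * A) + (4 * x * A^+2) + (- 48 * x^+2) + (12 * x^+2 * A) + (12 * x^+3)
  | 2%N => (- ((2^+6 * 19) / 3)) + ((320 / 9) * A) + (16 * A^+2) + (- (16 / 9) * A^+3)
      + ((320 / 3) * x) + (96 * x * A) + (- 16 * x * A^+2) + (144 * x^+2) + (- 48 * x^+2 * A)
      + (- 48 * x^+3)
  | 3%N => (((2^+8 * 331) / 3)) + (- ((2^+6 * (3 * 1000 + 619)) / 27) * A)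
      + (((2^+7 * 59) / 9) * A^+2) + (- (704 / 27) * A^+3)
      + (- ((2^+6 * (3 * 1000 + 619)) / 9) * x) + (((2^+8 * 59) / 3) * x * A)
      + (- (704 / 3) * x * A^+2) + ((2^+7 * 59) * x^+2) + (- 704 * x^+2 * A) + (- 704 * x^+3)
  | 4%N => (- (2^+11 * 3^+2)) + ((2^+9 * 3^+3) * A) + (- ((2^+10 * 5) / 3) * A^+2)
      + ((512 / 9) * A^+3) + ((2^+9 * 3^+4) * x) + (- (2^+11 * 5) * x * A) + (512 * x * A^+2)
      + (- (2^+10 * 3^+1 * 5) * x^+2) + ((2^+9 * 3^+1) * x^+2 * A) + ((2^+9 * 3^+1) * x^+3)
  | 5%N => (- ((2^+12 * (1 * 1000 + 895)) / 3)) + (((2^+14 * 241) / 9) * A)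
      + (- (2^+13 * 3^+1) * A^+2) + ((2^+12 / 9) * A^+3) + (((2^+14 * 241) / 3) * x)
      + (- (2^+14 * 3^+2) * x * A) + (2^+12 * x * A^+2) + (- (2^+13 * 3^+3) * x^+2)
      + ((2^+12 * 3^+1) * x^+2 * A) + ((2^+12 * 3^+1) * x^+3)
  | 6%N => (((2^+19 * 55) / 3)) + (- ((2^+17 * 299) / 27) * A) + (((2^+17 * 5) / 9) * A^+2)
      + (- (2^+15 / 27) * A^+3) + (- ((2^+17 * 299) / 9) * x) + (((2^+18 * 5) / 3) * x * A)
      + (- (2^+15 / 3) * x * A^+2) + ((2^+17 * 5) * x^+2) + (- 2^+15 * x^+2 * A)
      + (- 2^+15 * x^+3)
  | _ => 0 end.

Definition c_cubic : nat -> F -> F := fun i x => match i with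
  | 0%N => ((1 / 16) * x) + (- (1 / 4) * x * b^+2) + (- (1 / 4) * x * A) + ((1 / 4) * x * A^+2)
      + (- (1 / 2) * x^+2) + (1 * x^+2 * A) + (1 * x^+3)
  | 1%N => (- (87 / 2)) + (6 * b^+2) + ((139 / 4) * A) + (1 * A * b^+2) + (- 7 * A^+2)
      + ((225 / 2) * x) + (- 6 * x * b^+2) + (- 62 * x * A) + (7 * x * A^+2) + (- 96 * x^+2)
      + (27 * x^+2 * A) + (27 * x^+3)
  | 2%N => (- (2^+2 * 3^+2 * 55)) + (48 * b^+2) + (873 * A) + (28 * A * b^+2) + (- 104 * A^+2)
      + ((2^+1 * 3^+1 * 449) * x) + (- 24 * x * b^+2) + (- 800 * x * A) + (52 * x * A^+2)
      + (- (2^+2 * 3^+1 * 101) * x^+2) + (180 * x^+2 * A) + (180 * x^+3)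
  | 3%N => ((2^+5 * 3^+2 * 91)) + (- (2^+7 * 3^+2) * b^+2) + (- (2^+2 * (2 * 1000 + 41)) * A)
      + (208 * A * b^+2) + (528 * A^+2) + (- (2^+4 * 3^+1 * 533) * x) + (384 * x * b^+2)
      + ((2^+6 * 85) * x * A) + (- 176 * x * A^+2) + ((2^+5 * 3^+2 * 29) * x^+2)
      + (- 912 * x^+2 * A) + (- 912 * x^+3)
  | 4%N => ((2^+6 * 3^+1 * (4 * 1000 + 637))) + (- (2^+8 * 3^+1 * 13) * b^+2)
      + (- (2^+4 * (13 * 1000 + 61)) * A) + (- 704 * A * b^+2) + ((2^+9 * 25) * A^+2)
      + (- (2^+4 * 3^+3 * (1 * 1000 + 477)) * x) + ((2^+6 * 3^+1 * 13) * x * b^+2)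
      + ((2^+6 * (1 * 1000 + 573)) * x * A) + (- (2^+7 * 25) * x * A^+2)
      + ((2^+6 * 3^+1 * 793) * x^+2) + (- (2^+6 * 3^+3 * 7) * x^+2 * A)
      + (- (2^+6 * 3^+3 * 7) * x^+3)
  | 5%N => (- (2^+7 * 3^+2 * 145)) + ((2^+9 * 3^+1 * 35) * b^+2) + ((2^+7 * 3^+1 * 115) * A)
      + (- (2^+9 * 25) * A * b^+2) + ((2^+11 * 5) * A^+2) + ((2^+7 * 3^+1 * 467) * x)
      + (- (2^+9 * 3^+1 * 7) * x * b^+2) + (- (2^+9 * 61) * x * A) + (- 2^+11 * x * A^+2)
      + (- (2^+10 * 3^+1 * 17) * x^+2) + ((2^+9 * 3^+2) * x^+2 * A) + ((2^+9 * 3^+2) * x^+3)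
  | 6%N => (- (2^+12 * 3^+3 * 569)) + ((2^+14 * 3^+3) * b^+2) + ((2^+11 * (4 * 1000 + 921)) * A)
      + (- 2^+13 * A * b^+2) + (- (2^+17 * 3^+1) * A^+2) + ((2^+11 * 3^+4 * 185) * x)
      + (- (2^+13 * 3^+2) * x * b^+2) + (- (2^+13 * 403) * x * A) + (2^+16 * x * A^+2)
      + (- (2^+13 * 3^+1 * 203) * x^+2) + ((2^+13 * 3^+1 * 11) * x^+2 * A)
      + ((2^+13 * 3^+1 * 11) * x^+3)
  | 7%N => (- (2^+14 * 3^+1 * 385)) + (- (2^+16 * 3^+1 * 7) * b^+2) + ((2^+17 * 17) * A)
      + (2^+18 * A * b^+2) + (- (2^+16 * 7) * A^+2) + ((2^+14 * 3^+2 * 37) * x)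
      + ((2^+16 * 3^+1) * x * b^+2) + (- (2^+16 * 5) * x * A) + (2^+16 * x * A^+2)
      + (- (2^+17 * 3^+1) * x^+2)
  | 8%N => ((2^+19 * 3^+3 * 89)) + (- (2^+21 * 3^+1) * b^+2) + (- (2^+16 * 3^+1 * 779) * A)
      + (2^+18 * A * b^+2) + (2^+22 * A^+2) + (- (2^+16 * 3^+1 * (2 * 1000 + 369)) * x)
      + ((2^+18 * 3^+1) * x * b^+2) + ((2^+18 * 145) * x * A) + (- 2^+19 * x * A^+2)
      + ((2^+18 * 3^+1 * 73) * x^+2) + (- (2^+18 * 3^+2) * x^+2 * A) + (- (2^+18 * 3^+2) * x^+3)
  | 9%N => (- (2^+19 * 3^+2 * 289)) + ((2^+21 * 3^+2) * b^+2) + ((2^+19 * 289) * A)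
      + (- 2^+21 * A * b^+2) + ((2^+19 * 901) * x) + (- 2^+21 * x * b^+2)
      + (- (2^+21 * 17) * x * A) + (- (2^+22 * 13) * x^+2) + (2^+21 * x^+2 * A) + (2^+21 * x^+3)
  | _ => 0 end.

Definition c_sum_op : nat -> F -> F := fun i x => match i with
  | 0%N => ((1 / 16) * x) + (- (1 / 4) * x * b^+2) + (- (1 / 4) * x * A) + ((1 / 4) * x * A^+2)
      + (- (1 / 2) * x^+2) + (1 * x^+2 * A) + (1 * x^+3)
  | 1%N => ((1 / 4)) + (- 1 * b^+2) + (- (1 / 4) * A) + (1 * A * b^+2) + (- (5 / 4) * x)
      + (1 * x * b^+2) + (1 * x * A) + (2 * x^+2) + (- 1 * x^+2 * A) + (- 1 * x^+3)
  | _ => 0 end.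

Definition c_sum_op8 : nat -> F -> F := fun i x => match i with
  | 0%N => ((1 / 16) * x) + (- (1 / 4) * x * b^+2) + (- (1 / 4) * x * A) + ((1 / 4) * x * A^+2)
      + (- (1 / 2) * x^+2) + (1 * x^+2 * A) + (1 * x^+3)
  | 1%N => (- (249 / 4)) + (9 * b^+2) + ((199 / 4) * A) + (1 * A * b^+2) + (- 10 * A^+2)
      + ((645 / 4) * x) + (- 9 * x * b^+2) + (- 89 * x * A) + (10 * x * A^+2) + (- 138 * x^+2)
      + (39 * x^+2 * A) + (39 * x^+3)
  | 2%N => (- (2^+2 * 3^+2 * 175)) + (240 * b^+2) + ((2^+1 * 3^+2 * 155) * A) + (40 * A * b^+2)
      + (- 320 * A^+2) + ((2^+1 * 3^+1 * (1 * 1000 + 445)) * x) + (- 120 * x * b^+2)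
      + (- (2^+3 * 325) * x * A) + (160 * x * A^+2) + (- (2^+3 * 3^+2 * 55) * x^+2)
      + (600 * x^+2 * A) + (600 * x^+3)
  | 3%N => (- (2^+5 * 3^+1 * (1 * 1000 + 565))) + ((2^+7 * 3^+1 * 5) * b^+2)
      + ((2^+5 * (1 * 1000 + 435)) * A) + (640 * A * b^+2) + (- (2^+8 * 3^+1 * 5) * A^+2)
      + ((2^+5 * (4 * 1000 + 385)) * x) + (- 640 * x * b^+2) + (- (2^+7 * 3^+2 * 25) * x * A)
      + ((2^+8 * 5) * x * A^+2) + (- (2^+9 * 85) * x^+2) + ((2^+7 * 35) * x^+2 * A)
      + ((2^+7 * 35) * x^+3)
  | 4%N => (- (2^+14 * 3^+1 * 25)) + ((2^+8 * (1 * 1000 + 115)) * A) + ((2^+10 * 5) * A * b^+2)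
      + (- (2^+12 * 5) * A^+2) + ((2^+13 * 3^+1 * 35) * x) + (- (2^+11 * 65) * x * A)
      + ((2^+10 * 5) * x * A^+2) + (- (2^+10 * 3^+1 * 65) * x^+2)
      + ((2^+10 * 3^+1 * 5) * x^+2 * A) + ((2^+10 * 3^+1 * 5) * x^+3)
  | 5%N => (- (2^+10 * 3^+2 * 265)) + (- (2^+12 * 3^+1 * 5) * b^+2) + ((2^+10 * 3^+1 * 145) * A)
      + ((2^+12 * 5) * A * b^+2) + (- (2^+13 * 5) * A^+2) + ((2^+10 * 3^+1 * 419) * x)
      + ((2^+12 * 3^+1) * x * b^+2) + (- (2^+12 * 37) * x * A) + (2^+13 * x * A^+2)
      + (- (2^+13 * 3^+3) * x^+2) + ((2^+12 * 3^+1) * x^+2 * A) + ((2^+12 * 3^+1) * x^+3)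
  | 6%N => ((2^+14 * 3^+1 * 121)) + (- (2^+16 * 3^+1) * b^+2) + (- (2^+13 * 121) * A)
      + (2^+15 * A * b^+2) + (- (2^+13 * 385) * x) + (2^+15 * x * b^+2) + ((2^+15 * 11) * x * A)
      + ((2^+15 * 17) * x^+2) + (- 2^+15 * x^+2 * A) + (- 2^+15 * x^+3)
  | _ => 0 end.


Ltac opnf_simpl :=
  rewrite /fmul1Xn /=;
  do 12 rewrite ?ftheta_opnf ?fmulX_opnf ?fmul1X_opnf ?fadd_opnf ?fscale_opnf.
Ltac opnf_coef := rewrite /s1 /s2 /q2 /q1 /q0 /r1 /r2 /r3; field;
  repeat (apply/andP; split); rewrite ?expf_neq0 ?natr_nz.

Lemma twist1_opnf T : twist 1 T = opnf c_twist1 T.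
Proof.
rewrite twistS /twisted_theta [in LHS](opnf_id T); opnf_simpl.
by apply: eq_opnf => i x; do 4 (try case: i => [|i]); rewrite /=; opnf_coef.
Qed.

Lemma twist2_opnf T : twist 2 T = opnf c_twist2 T.
Proof.
rewrite twistS twist1_opnf /twisted_theta; opnf_simpl.
by apply: eq_opnf => i x; do 6 (try case: i => [|i]); rewrite /=; opnf_coef.
Qed.

Lemma twist3_opnf T : twist 3 T = opnf c_twist3 T.
Proof.
rewrite twistS twist2_opnf /twisted_theta; opnf_simpl.
by apply: eq_opnf => i x; do 8 (try case: i => [|i]); rewrite /=; opnf_coef.
Qed.

Lemma cubic_lower_op_opnf T : cubic_lower_op T = opnf c_cubic_lower T.
Proof.
rewrite /cubic_lower_op twist3_opnf twist2_opnf twist1_opnf; opnf_simpl.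
by apply: eq_opnf => i x; do 8 (try case: i => [|i]); rewrite /=; opnf_coef.
Qed.

Lemma cubic_upper_op_opnf T : cubic_upper_op T = opnf c_cubic_upper T.
Proof.
rewrite /cubic_upper_op twist3_opnf twist2_opnf twist1_opnf.
rewrite [in fmul1Xn 8 6 T](opnf_id T); opnf_simpl.
by apply: eq_opnf => i x; do 8 (try case: i => [|i]); rewrite /=; opnf_coef.
Qed.

Lemma cubic_op_opnf T : cubic_op T = opnf c_cubic T.
Proof.
rewrite /cubic_op cubic_lower_op_opnf cubic_upper_op_opnf; opnf_simpl.
by apply: eq_opnf => i x; do 11 (try case: i => [|i]); rewrite /=; opnf_coef.
Qed.

Lemma sum_op_opnf T : sum_op T = opnf c_sum_op T.
Proof.
rewrite /sum_op /lower_op /upper_op_sum [in LHS](opnf_id T); opnf_simpl.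
by apply: eq_opnf => i x; do 3 (try case: i => [|i]); rewrite /=; opnf_coef.
Qed.

Lemma fmul1Xn_sum_op_opnf T : fmul1Xn 8 5 (opnf c_sum_op T) = opnf c_sum_op8 T.
Proof.
opnf_simpl.
by apply: eq_opnf => i x; do 8 (try case: i => [|i]); rewrite /=; opnf_coef.
Qed.

Lemma fmul1Xn_sum_op8_opnf T : fmul1Xn (-4) 3 (opnf c_sum_op8 T) = opnf c_cubic T.
Proof.
opnf_simpl.
by apply: eq_opnf => i x; do 11 (try case: i => [|i]); rewrite /=; opnf_coef.
Qed.

Lemma cubic_opE T : cubic_op T = fmul1Xn (-4) 3 (fmul1Xn 8 5 (sum_op T)).
Proof. by rewrite cubic_op_opnf sum_op_opnf fmul1Xn_sum_op_opnf fmul1Xn_sum_op8_opnf. Qed.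

End OperatorNormalForm.

Section Prefactor.
Variable F : fieldType.
Hypothesis hchar : [pchar F] =i pred0.
Variable A : F.
Implicit Types U : fps F.

Definition prefactor (e : F) U : fps F := fmul (fbinom e 8) (fmul (fbinom A (-4)) U).

Lemma prefactorS e U : prefactor (e + 1) U = prefactor e (fmul1X 8 U).
Proof. by rewrite /prefactor fmul_fbinomS // !fmul1Xr. Qed.

Lemma ftheta_prefactor e U :
  fmul1X (-4) (ftheta (prefactor e U)) = fmul1X 8 (prefactor (e - 2) (twisted_theta e A U)).
Proof.
set P := fbinom (e - 2) 8; set Q := fbinom (A - 1) (-4).
have eP1 : fbinom (e - 1) 8 = fmul1X 8 P by rewrite fmul1X_fbinom //; congr fbinom; ring.
have eP2 : fbinom e 8 = fmul1X 8 (fmul1X 8 P).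
  by rewrite !fmul1X_fbinom //; congr fbinom; ring.
have eQ : fbinom A (-4) = fmul1X (-4) Q by rewrite fmul1X_fbinom // subrK.
rewrite /prefactor /twisted_theta !fthetaM !ftheta_fbinom // eP1 eP2 eQ.
do 20 rewrite ?fmul1Xl ?fmulZl ?fmulXl ?fmul1Xr ?fmulZr ?fmulXr ?fmulDr.
set W := fmul P (fmul Q U); set W' := fmul P (fmul Q (ftheta U)).
by fps_ext n; case: n => [|[|[|n]]] /=; rewrite ?mulrS; ring.
Qed.

Lemma prefactor_fmul1Xn e k U : prefactor e (fmul1Xn 8 k U) = prefactor (e + k%:R) U.
Proof.
elim: k e => [|k IH] e; first by rewrite addr0.
by rewrite /fmul1Xn iterS -/(fmul1Xn 8 k U) -prefactorS IH mulrS addrA.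
Qed.

Lemma prefactorD e U V : prefactor e (fadd U V) = fadd (prefactor e U) (prefactor e V).
Proof. by rewrite /prefactor !fmulDr. Qed.

Lemma prefactorZ e c U : prefactor e (fscale c U) = fscale c (prefactor e U).
Proof. by rewrite /prefactor !fmulZr. Qed.

Lemma prefactor_fzero e : prefactor e (fzero F) = fzero F.
Proof. by rewrite /prefactor !fmulr0. Qed.

End Prefactor.

Section CubicTransformation.
Variable F : fieldType.
Hypothesis hchar : [pchar F] =i pred0.
Variables A b : F.
Hypothesis hl1 : forall m : nat, 3/4 + A/2 + b/2 + m%:R != 0.
Hypothesis hl2 : forall m : nat, 3/4 + A/2 - b/2 + m%:R != 0.
Local Notation u := (cubic_arg F).
Implicit Types X Y Z T U : fps F.

Definition cubic_hyp : fps F :=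
  hyp32 (A/3) ((A+1)/3) ((A+2)/3) (3/4 + A/2 + b/2) (3/4 + A/2 - b/2).

Definition cubic_sum : fps F := fun n => poch A n * poch (1/2 - b) n * poch (1/2 + b) n
   / ((n`!)%:R * poch (3/4 + A/2 + b/2) n * poch (3/4 + A/2 - b/2) n).

Lemma lower_op_cubic_hyp : lower_op A b cubic_hyp = fmulX (upper_op_hyp A cubic_hyp).
Proof.
rewrite /lower_op /upper_op_hyp; fps_ext n; case: n => [|m] /=; first ring.
rewrite /cubic_hyp /hyp32 !pochS factS natrM /s1 /s2 /q2 /q1 /q0.
have := poch_nz hl1 m; have := poch_nz hl2 m; have := hl1 m; have := hl2 m.
have := fact_nz hchar m; have := natr_nz hchar (ltn0Sn m); rewrite mulrSr.
by move=> *; field; field_nz hchar.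
Qed.

Lemma lower_op_cubic_sum : lower_op A b cubic_sum = fmulX (upper_op_sum A b cubic_sum).
Proof.
rewrite /lower_op /upper_op_sum; fps_ext n; case: n => [|m] /=; first ring.
rewrite /cubic_sum !pochS factS natrM /s1 /s2 /r1 /r2 /r3.
have := poch_nz hl1 m; have := poch_nz hl2 m; have := hl1 m; have := hl2 m.
have := fact_nz hchar m; have := natr_nz hchar (ltn0Sn m); rewrite mulrSr.
by move=> *; field; field_nz hchar.
Qed.

Lemma sum_op_cubic_sum : sum_op A b cubic_sum = fzero F.
Proof. by rewrite /sum_op lower_op_cubic_sum; fps_ext n; rewrite /fzero; ring. Qed.

(* The hypergeometric equation of [cubic_hyp] in the variable [u], multiplied by
   [(1 - 4x)^3] so that [u (1 - 4x)^3 = -27 x]; [X_j] stands for the [j]-th Euler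
   derivative in [u] of [X0]. *)
Definition cubic_eq X0 X1 X2 X3 : fps F :=
  fadd (fmul1Xn (-4) 3 (fadd X3 (fadd (fscale (s1 A) X2) (fscale (s2 A b) X1))))
       (fscale 27 (fmulX (fadd X3 (fadd (fscale (q2 A) X2)
                                          (fadd (fscale (q1 A) X1) (fscale (q0 A) X0)))))).

(* [Y = (1 - 4x) theta X / (1 + 8x)] is the Euler derivative of [X] in the variable [u]. *)
Definition theta_chain X Y := fmul1X 8 Y = fmul1X (-4) (ftheta X).

Definition hyp_chain (j : nat) : fps F := fcomp (iter j (@ftheta F) cubic_hyp) u.

Lemma theta_chain_hyp j : theta_chain (hyp_chain j) (hyp_chain j.+1).
Proof. by rewrite /theta_chain /hyp_chain ftheta_fcomp_cubic_arg. Qed.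

Lemma fmul1Xn_cubic_arg Y : fmul1Xn (-4) 3 (fmul u Y) = fscale (-27) (fmulX Y).
Proof.
rewrite /fmul1Xn /= cubic_argE fmulZl fmulXl !fmul1XZ !fmul1XX -!fmul_fbinomS //.
by rewrite (_ : -3 + 1 + 1 + 1 = 0) ?fbinom0 ?fmul1 //; ring.
Qed.

Lemma cubic_eq_hyp :
  cubic_eq (hyp_chain 0) (hyp_chain 1) (hyp_chain 2) (hyp_chain 3) = fzero F.
Proof.
have := congr1 (fun f => fcomp f u) lower_op_cubic_hyp.
rewrite /lower_op /upper_op_hyp fcompX ?cubic_arg0 // !fcompD !fcompZ.
rewrite /cubic_eq /hyp_chain !iterS [iter 0 _ _]/= => ->.
by rewrite fmul1Xn_cubic_arg; fps_ext n; rewrite /fzero; case: n => [|n] /=; ring.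
Qed.

Definition vanish_below X n := forall i, (i < n)%N -> X i = 0.

Lemma vanish_below_fadd X Y n :
  vanish_below X n -> vanish_below Y n -> vanish_below (fadd X Y) n.
Proof. by move=> vX vY i lt_in; rewrite /fadd vX ?vY ?addr0. Qed.

Lemma vanish_below_fscale c X n : vanish_below X n -> vanish_below (fscale c X) n.
Proof. by move=> vX i lt_in; rewrite /fscale vX ?mulr0. Qed.

Lemma vanish_below_fmul1X d X n :
  vanish_below X n -> vanish_below (fmul1X d X) n /\ fmul1X d X n = X n.
Proof.
move=> vX; have xX i : (i <= n)%N -> fmulX X i = 0 by case: i => // i /vX.
rewrite /fmul1X /fadd /fscale; split=> [i lt_in|]; last by rewrite xX // mulr0 addr0.
by rewrite vX // xX ?(ltnW lt_in) // mulr0 addr0.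
Qed.

Lemma theta_chain_vanish X Y n :
  theta_chain X Y -> vanish_below X n -> vanish_below Y n /\ Y n = n%:R * X n.
Proof.
move=> XY vX; have coef i : fmul1X 8 Y i = fmul1X (-4) (ftheta X) i by rewrite XY.
have vY : vanish_below Y n.
  elim=> [|i IH] lt_in.
    have := coef 0%N; rewrite /fmul1X /fadd /fscale /fmulX /ftheta.
    by rewrite mulr0 addr0 mul0r mulr0 addr0.
  have := coef i.+1; rewrite /fmul1X /fadd /fscale /fmulX /ftheta /=.
  rewrite IH ?(ltnW lt_in) // vX // vX ?(ltnW lt_in) //.
  by rewrite !mulr0 addr0 => ->; rewrite addr0.
split => //; have := coef n; rewrite /fmul1X /fadd /fscale /fmulX /ftheta.
case: n vX vY => [|m] vX vY; first by rewrite !mulr0 !addr0.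
by rewrite /= (vX m) ?(vY m) // !mulr0 !addr0.
Qed.

Lemma cubic_eq_coef D0 D1 D2 D3 n :
  theta_chain D0 D1 -> theta_chain D1 D2 -> theta_chain D2 D3 -> vanish_below D0 n ->
  cubic_eq D0 D1 D2 D3 n = (n%:R ^+ 3 + s1 A * n%:R ^+ 2 + s2 A b * n%:R) * D0 n.
Proof.
move=> D01 D12 D23 v0.
have [v1 e1] := theta_chain_vanish D01 v0.
have [v2 e2] := theta_chain_vanish D12 v1.
have [v3 e3] := theta_chain_vanish D23 v2.
rewrite /cubic_eq /fmul1Xn /=.
set PD := fadd D3 (fadd (fscale (s1 A) D2) (fscale (s2 A b) D1)).
set QD := fadd D3 (fadd (fscale (q2 A) D2) (fadd (fscale (q1 A) D1) (fscale (q0 A) D0))).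
have vP : vanish_below PD n.
  by do 2?[apply: vanish_below_fadd]; try apply: vanish_below_fscale.
have vQ : vanish_below QD n.
  by do 3?[apply: vanish_below_fadd]; try apply: vanish_below_fscale.
have [vP1 eP1] := vanish_below_fmul1X (-4) vP.
have [vP2 eP2] := vanish_below_fmul1X (-4) vP1.
have [_ eP3] := vanish_below_fmul1X (-4) vP2.
have xQ : fmulX QD n = 0 by case: (n) vQ => // m; apply.
rewrite {1}/fadd {1}/fscale xQ eP3 eP2 eP1 /PD /fadd /fscale e3 e2 e1.
by ring.
Qed.

Lemma cubic_lower_poly_nz m :
  (m.+1%:R ^+ 3 + s1 A * m.+1%:R ^+ 2 + s2 A b * m.+1%:R : F) != 0.
Proof.
have -> : (m.+1%:R ^+ 3 + s1 A * m.+1%:R ^+ 2 + s2 A b * m.+1%:R : F) =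
   m.+1%:R * (3/4 + A/2 + b/2 + m%:R) * (3/4 + A/2 - b/2 + m%:R).
  by rewrite /s1 /s2 mulrSr; field; rewrite ?natr_nz.
by rewrite !mulf_neq0 // natr_nz.
Qed.

Definition fsub X Y := fadd X (fscale (-1) Y).

Lemma theta_chain_sub X0 X1 Y0 Y1 :
  theta_chain X0 X1 -> theta_chain Y0 Y1 -> theta_chain (fsub X0 Y0) (fsub X1 Y1).
Proof. by move=> eX eY; rewrite /theta_chain fthetaD fthetaZ !fmul1XD !fmul1XZ eX eY. Qed.

Lemma cubic_eq_sub X0 X1 X2 X3 Y0 Y1 Y2 Y3 :
  cubic_eq (fsub X0 Y0) (fsub X1 Y1) (fsub X2 Y2) (fsub X3 Y3) =
  fsub (cubic_eq X0 X1 X2 X3) (cubic_eq Y0 Y1 Y2 Y3).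
Proof. by rewrite /cubic_eq /fsub /fmul1Xn /=; fps_ext n; case: n => [|[|[|[|n]]]] /=; ring. Qed.

Lemma cubic_eq_unique X0 X1 X2 X3 Y0 Y1 Y2 Y3 :
  theta_chain X0 X1 -> theta_chain X1 X2 -> theta_chain X2 X3 ->
  theta_chain Y0 Y1 -> theta_chain Y1 Y2 -> theta_chain Y2 Y3 ->
  cubic_eq X0 X1 X2 X3 = fzero F -> cubic_eq Y0 Y1 Y2 Y3 = fzero F ->
  X0 0 = Y0 0 -> X0 = Y0.
Proof.
move=> X01 X12 X23 Y01 Y12 Y23 eqX eqY e0.
have D01 := theta_chain_sub X01 Y01; have D12 := theta_chain_sub X12 Y12.
have D23 := theta_chain_sub X23 Y23.
have eqD : cubic_eq (fsub X0 Y0) (fsub X1 Y1) (fsub X2 Y2) (fsub X3 Y3) = fzero F.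
  by rewrite cubic_eq_sub eqX eqY /fsub; fps_ext n; rewrite /fzero; ring.
have D0_eq0 n : fsub X0 Y0 n = 0.
  elim/ltn_ind: n => -[_|m IH]; first by rewrite /fsub /fadd /fscale e0; ring.
  have := congr1 (fun f => f m.+1) eqD; rewrite (cubic_eq_coef D01 D12 D23) // => /eqP.
  by rewrite mulf_eq0 (negbTE (cubic_lower_poly_nz m)) => /eqP.
apply: functional_extensionality => n; apply/eqP; rewrite -subr_eq0.
by have := D0_eq0 n; rewrite /fsub /fadd /fscale mulN1r => ->.
Qed.

Definition sum_chain (j : nat) : fps F := prefactor A (-2 * j%:R) (twist A j cubic_sum).

Lemma theta_chain_sum j : theta_chain (sum_chain j) (sum_chain j.+1).
Proof.
rewrite /theta_chain /sum_chain ftheta_prefactor // twistS.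
by congr (fmul1X 8 (prefactor _ _ _)); rewrite mulrS; ring.
Qed.

Lemma cubic_eq_prefactor e T :
  cubic_eq (prefactor A e (fmul1Xn 8 6 T)) (prefactor A e (fmul1Xn 8 4 (twist A 1 T)))
           (prefactor A e (fmul1Xn 8 2 (twist A 2 T))) (prefactor A e (twist A 3 T)) =
  prefactor A e (cubic_op A b T).
Proof.
rewrite /cubic_eq /cubic_op /cubic_lower_op /cubic_upper_op /prefactor /fmul1Xn /=.
by do 20 rewrite -?fmul1Xr -?fmulZr -?fmulXr -?fmulDr.
Qed.

Lemma cubic_eq_sum :
  cubic_eq (sum_chain 0) (sum_chain 1) (sum_chain 2) (sum_chain 3) = fzero F.
Proof.
have shift j : (j <= 3)%N ->
    sum_chain j = prefactor A (-6) (fmul1Xn 8 (6 - 2 * j) (twist A j cubic_sum)).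
  move=> le_j3; rewrite prefactor_fmul1Xn // /sum_chain natrB ?natrM; last by lia.
  by congr prefactor; ring.
rewrite !shift // cubic_eq_prefactor cubic_opE // sum_op_cubic_sum.
by rewrite /fmul1Xn /= !fmul1X0 prefactor_fzero.
Qed.

Theorem fcomp_cubic_hyp : fcomp cubic_hyp u = fmul (fbinom A (-4)) cubic_sum.
Proof.
have := cubic_eq_unique (theta_chain_hyp 0) (theta_chain_hyp 1) (theta_chain_hyp 2)
  (theta_chain_sum 0) (theta_chain_sum 1) (theta_chain_sum 2) cubic_eq_hyp cubic_eq_sum.
rewrite /hyp_chain /sum_chain /prefactor /= mulr0 fbinom0 // fmul1; apply.
rewrite fcomp_coef0 /fmul big_ord1 fbinom_coef0 /cubic_hyp /cubic_sum /hyp32 /poch.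
by rewrite !big_ord0 fact0 !mul1r invr1.
Qed.

End CubicTransformation.

Section Summation.
Variable F : fieldType.
Hypothesis hchar : [pchar F] =i pred0.
Implicit Types S T : fps F.
Local Notation u := (cubic_arg F).

Definition lhs (k : nat) (a b : F) : fps F :=
  fcomp (hyp32 (1/3 + 2 * k%:R/3 + a/3) (2/3 + 2 * k%:R/3 + a/3) (1 + 2 * k%:R/3 + a/3)
               (3/4 + k%:R/2 + a/2 + b/2) (3/4 + k%:R/2 + a/2 - b/2)) u.

Definition qsum (k : nat) (a b : F) : fps F := fun n =>
  poch a n * poch (1/2 - k%:R - b) n * poch (1/2 - k%:R + b) n
  / ((n`!)%:R * poch (3/4 + k%:R/2 + a/2 + b/2) n * poch (3/4 + k%:R/2 + a/2 - b/2) n)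
  * Q3 k a b n%:R.

Definition rhs (k : nat) (a b : F) : fps F :=
  prefactor (1 + 2 * k%:R + a) (-1 - 2 * k%:R) (qsum k a b).

(* Transfers the contiguity relation of the left-hand side to the right-hand side. *)
Lemma prefactor_contiguous f0 e c S T :
  fmul1X (-4) S = fadd (fmul1Xn 8 2 T) (fscale c^-1 (twisted_theta e f0 T)) ->
  fmul1X 8 (prefactor (f0 + 1) (e - 2) S) =
  fadd (fmul1X 8 (prefactor f0 e T)) (fscale c^-1 (fmul1X (-4) (ftheta (prefactor f0 e T)))).
Proof.
move=> eS.
have -> : prefactor (f0 + 1) (e - 2) S = prefactor f0 (e - 2) (fmul1X (-4) S).
  by rewrite /prefactor fmul_fbinomS // !fmul1Xr.
rewrite eS prefactorD prefactorZ prefactor_fmul1Xn // subrK ftheta_prefactor //.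
by rewrite fmul1XD fmul1XZ.
Qed.

Lemma qsum0 a b : a != 0 ->
  qsum 0 a b = fadd (cubic_sum a b) (fscale (a/3)^-1 (ftheta (cubic_sum a b))).
Proof.
move=> a_nz; fps_ext n; rewrite /qsum /cubic_sum /= mulr0n subr0 mul0r addr0.
change (cubic_sum a b n * (1 + 3 * n%:R / a) =
        cubic_sum a b n + (a/3)^-1 * (n%:R * cubic_sum a b n)).
by field; rewrite a_nz natr_nz.
Qed.

Lemma twisted_theta_base (a : F) T : a != 0 ->
  fmul1X (-4) (fmul1X 8 (fadd T (fscale (a/3)^-1 (ftheta T)))) =
  fadd (fmul1Xn 8 2 T) (fscale (a/3)^-1 (twisted_theta 0 a T)).
Proof.
move=> a_nz; rewrite /twisted_theta /fmul1Xn /=.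
by fps_ext n; case: n => [|[|[|n]]] /=; field; field_nz hchar.
Qed.

Lemma qsumS k a b : a != 0 -> 1/2 - k.+1%:R - b != 0 -> 1/2 - k.+1%:R + b != 0 ->
  2 * k.+1%:R + a != 0 ->
  (forall m : nat, 3/4 + k.+1%:R/2 + a/2 + b/2 + m%:R != 0) ->
  (forall m : nat, 3/4 + k.+1%:R/2 + a/2 - b/2 + m%:R != 0) ->
  let T := qsum k (a + 1) b in
  qsum k.+1 a b = fadd (fadd T (fscale (3 / (2 * k.+1%:R + a)) (ftheta T)))
     (fmulX (fadd (fscale (8 * (3 - 4 * k.+1%:R + a) / (2 * k.+1%:R + a)) T)
                  (fscale (24 / (2 * k.+1%:R + a)) (ftheta T)))).
Proof.
move=> a_nz hb1 hb2 hK hl1 hl2 T.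
have eL1 : 3/4 + k.+1%:R/2 + a/2 + b/2 = 3/4 + k%:R/2 + (a+1)/2 + b/2 :> F by ring.
have eL2 : 3/4 + k.+1%:R/2 + a/2 - b/2 = 3/4 + k%:R/2 + (a+1)/2 - b/2 :> F by ring.
have eU1 : 1/2 - k.+1%:R - b + 1 = 1/2 - k%:R - b :> F by ring.
have eU2 : 1/2 - k.+1%:R + b + 1 = 1/2 - k%:R + b :> F by ring.
rewrite /T; fps_ext n; case: n => [|m].
  by rewrite /qsum /= /poch !big_ord0 fact0 /=; field; field_nz hchar.
rewrite /qsum (pochSl a) (pochSl (1/2 - _ - b)) (pochSl (1/2 - _ + b)) eU1 eU2 eL1 eL2.
rewrite !pochS factS natrM [Q3 k.+1 a b _]/=.
have -> : m.+1%:R - 1 = m%:R :> F by rewrite mulrSr addrK.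
have hl1m := hl1 m; have hl2m := hl2 m; rewrite eL1 in hl1m; rewrite eL2 in hl2m.
have hp1 := poch_nz hl1 m; have hp2 := poch_nz hl2 m; rewrite eL1 in hp1; rewrite eL2 in hp2.
have hfact := fact_nz hchar m; have hm := natr_nz hchar (ltn0Sn m).
by field; field_nz hchar.
Qed.

Lemma twisted_theta_step k (a : F) T : 2 * k.+1%:R + a != 0 ->
  fmul1X (-4) (fadd (fadd T (fscale (3 / (2 * k.+1%:R + a)) (ftheta T)))
     (fmulX (fadd (fscale (8 * (3 - 4 * k.+1%:R + a) / (2 * k.+1%:R + a)) T)
                  (fscale (24 / (2 * k.+1%:R + a)) (ftheta T))))) =
  fadd (fmul1Xn 8 2 T) (fscale (1/3 + 2 * k%:R/3 + (a+1)/3)^-1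
     (twisted_theta (-1 - 2 * k%:R) (1 + 2 * k%:R + (a+1)) T)).
Proof.
move=> hK; rewrite /twisted_theta /fmul1Xn /=.
by fps_ext n; case: n => [|[|[|n]]] /=; field; field_nz hchar.
Qed.

Lemma lhs_eq_rhs0 a b : a != 0 ->
  (forall m : nat, 3/4 + a/2 + b/2 + m%:R != 0) ->
  (forall m : nat, 3/4 + a/2 - b/2 + m%:R != 0) ->
  lhs 0 a b = rhs 0 a b.
Proof.
move=> a_nz hl1 hl2; apply: (@fmul1X_inj _ hchar 8).
have -> : lhs 0 a b =
    fcomp (hyp32 (a/3 + 1) ((a+1)/3) ((a+2)/3) (3/4 + a/2 + b/2) (3/4 + a/2 - b/2)) u.
  by rewrite /lhs hyp32_rot; congr (fcomp (hyp32 _ _ _ _ _) _); field; rewrite ?natr_nz.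
have -> : rhs 0 a b = prefactor (a + 1) (0 - 2) (fmul1X 8 (qsum 0 a b)).
  by rewrite /rhs -prefactorS //; congr prefactor; ring.
have a3_nz : a/3 != 0 by rewrite mulf_neq0 // invr_eq0 natr_nz.
rewrite fcomp_hyp32_contiguous // -/(cubic_hyp a b) fcomp_cubic_hyp //.
rewrite (prefactor_contiguous (c := a/3) (T := cubic_sum a b)) ?qsum0 ?twisted_theta_base //.
by rewrite /prefactor fbinom0 // fmul1.
Qed.

Lemma lhs_eq_rhsS k a b : a != 0 -> 2 * k.+1%:R + a != 0 ->
  1/2 - k.+1%:R - b != 0 -> 1/2 - k.+1%:R + b != 0 ->
  (forall m : nat, 3/4 + k.+1%:R/2 + a/2 + b/2 + m%:R != 0) ->
  (forall m : nat, 3/4 + k.+1%:R/2 + a/2 - b/2 + m%:R != 0) ->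
  lhs k (a + 1) b = rhs k (a + 1) b -> lhs k.+1 a b = rhs k.+1 a b.
Proof.
move=> a_nz hK hb1 hb2 hl1 hl2 IHa; apply: (@fmul1X_inj _ hchar 8).
have eL1 : 3/4 + k.+1%:R/2 + a/2 + b/2 = 3/4 + k%:R/2 + (a+1)/2 + b/2 :> F by ring.
have eL2 : 3/4 + k.+1%:R/2 + a/2 - b/2 = 3/4 + k%:R/2 + (a+1)/2 - b/2 :> F by ring.
set c := 1/3 + 2 * k%:R/3 + (a+1)/3.
have c_nz : c != 0.
  have -> : c = (2 * k.+1%:R + a) / 3 by rewrite /c mulrSr; field; rewrite ?natr_nz.
  by rewrite mulf_neq0 // invr_eq0 natr_nz.
have -> : lhs k.+1 a b = fcomp (hyp32 (c + 1) (2/3 + 2 * k%:R/3 + (a+1)/3)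
    (1 + 2 * k%:R/3 + (a+1)/3) (3/4 + k%:R/2 + (a+1)/2 + b/2) (3/4 + k%:R/2 + (a+1)/2 - b/2)) u.
  rewrite /lhs hyp32_rot -eL1 -eL2 /c.
  by congr (fcomp (hyp32 _ _ _ _ _) _); rewrite mulrSr; field; rewrite ?natr_nz.
have -> : rhs k.+1 a b =
    prefactor ((1 + 2 * k%:R + (a+1)) + 1) ((-1 - 2 * k%:R) - 2) (qsum k.+1 a b).
  by rewrite /rhs; congr prefactor; rewrite mulrSr; ring.
rewrite fcomp_hyp32_contiguous // -/(lhs k (a+1) b) IHa.
by rewrite (prefactor_contiguous (c := c) (T := qsum k (a+1) b)) ?qsumS ?twisted_theta_step.
Qed.

Lemma lhs_eq_rhs k : forall a b : F,
  (forall j : nat, (j <= 2 * k)%N -> a + j%:R != 0) ->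
  (forall i : nat, (1 <= i <= k)%N -> (1/2 - i%:R - b) * (1/2 - i%:R + b) != 0) ->
  (forall m : nat, 3/4 + k%:R/2 + a/2 + b/2 + m%:R != 0) ->
  (forall m : nat, 3/4 + k%:R/2 + a/2 - b/2 + m%:R != 0) ->
  lhs k a b = rhs k a b.
Proof.
elim: k => [|k IH] a b ha hb hl1 hl2;
  have a_nz : a != 0 by have := ha 0%N (leq0n _); rewrite addr0.
  by apply: lhs_eq_rhs0; move=> // m; [move: (hl1 m) | move: (hl2 m)];
    rewrite mulr0n mul0r addr0.
have [hb1 hb2] : (1/2 - k.+1%:R - b != 0) /\ (1/2 - k.+1%:R + b != 0).
  by have := hb k.+1 (leqnn _); rewrite mulf_eq0 negb_or => /andP.
apply: lhs_eq_rhsS => //.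
  by have := ha (2 * k.+1)%N (leqnn _); rewrite natrM addrC.
apply: IH => [j le_j2k|i /andP[i_gt0 le_ik]|m|m].
- by rewrite -addrA -mulrS ha //; lia.
- by apply: hb; rewrite i_gt0 ltnW.
- by rewrite (_ : _ + (a+1)/2 + _ = 3/4 + k.+1%:R/2 + a/2 + b/2) //; rewrite mulrSr; ring.
- by rewrite (_ : _ + (a+1)/2 - _ = 3/4 + k.+1%:R/2 + a/2 - b/2) //; rewrite mulrSr; ring.
Qed.

End Summation.

Section Polynomiality.
Variable F : fieldType.
Hypothesis hchar : [pchar F] =i pred0.

Lemma size_polyD_lead (p q : {poly F}) n : size p = n.+1 -> size q = n.+1 ->
  lead_coef p + lead_coef q != 0 -> size (p + q) = n.+1.
Proof.
move=> sp sq lead_nz; apply/eqP; rewrite eqn_leq; apply/andP; split.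
  by apply: leq_trans (size_polyD _ _) _; rewrite sp sq maxnn.
rewrite leqNgt; apply/negP => lt_pq; move: lead_nz.
by rewrite /lead_coef sp sq -coefD nth_default ?eqxx // -ltnS.
Qed.

Lemma size_Mprod_XsubC (p : {poly F}) (r : seq F) :
  p != 0 -> size (p * \prod_(x <- r) ('X - x%:P)) = (size p + size r)%N.
Proof. by move=> p_nz; rewrite size_Mmonic ?monic_prod_XsubC // size_prod_XsubC addnS. Qed.

Lemma lead_coef_Mprod_XsubC (p : {poly F}) (r : seq F) :
  lead_coef (p * \prod_(x <- r) ('X - x%:P)) = lead_coef p.
Proof. by rewrite lead_coef_Mmonic ?monic_prod_XsubC. Qed.

Lemma Q3S_poly k (a b : F) (p : {poly F}) :
  a != 0 -> 2 * k.+1%:R + a != 0 -> 1/2 - k.+1%:R - b != 0 -> 1/2 - k.+1%:R + b != 0 ->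
  size p = (4 * k + 2)%N -> (forall n, p.[n] = Q3 k (a + 1) b n) ->
  exists q : {poly F}, size q = (4 * k.+1 + 2)%N /\ forall n, q.[n] = Q3 k.+1 a b n.
Proof.
move=> a_nz hK hb1 hb2 size_p p_Q3; set K : F := k.+1%:R.
have p_nz : p != 0 by rewrite -size_poly_eq0 size_p addn2.
set p1 := p \Po ('X - 1%:P).
have size_p1 : size p1 = size p by rewrite size_comp_poly2 // size_XsubC.
have lead_p1 : lead_coef p1 = lead_coef p.
  by rewrite lead_coef_comp ?size_XsubC // lead_coefXsubC expr1n mulr1.
have p1_nz : p1 != 0 by rewrite -size_poly_eq0 size_p1 size_p addn2.
set R1 := \prod_(x <- [:: - (2 * K + a) / 3; - a; K + b - 1/2; K - b - 1/2]) ('X - x%:P).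
set R2 := \prod_(x <- [:: (4 * K - a) / 3; 0; 1/4 - K/2 - a/2 - b/2; 1/4 - K/2 - a/2 + b/2])
  ('X - x%:P).
set C := ((2 * K + a) * a * (1/2 - K - b) * (1/2 - K + b))^-1.
have C_nz : C != 0 by rewrite invr_eq0 !mulf_neq0.
exists (C *: (3 *: (p * R1) + 24 *: (p1 * R2))); split=> [|n].
  have nz3 : 3 != 0 :> F by rewrite natr_nz.
  have nz24 : 24 != 0 :> F by rewrite natr_nz.
  have size_T1 : size (3 *: (p * R1)) = (4 * k.+1 + 1).+1.
    by rewrite size_scale // size_Mprod_XsubC // size_p /=; lia.
  have size_T2 : size (24 *: (p1 * R2)) = (4 * k.+1 + 1).+1.
    by rewrite size_scale // size_Mprod_XsubC // size_p1 size_p /=; lia.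
  rewrite size_scale // (size_polyD_lead size_T1 size_T2); first by lia.
  rewrite !lead_coefZ !lead_coef_Mprod_XsubC lead_p1 -mulrDl mulf_neq0 ?lead_coef_eq0 //.
  by rewrite -natrD natr_nz.
rewrite /R1 /R2 !big_cons big_nil !hornerE horner_comp !hornerE !p_Q3 /= /C /K.
by field; field_nz hchar.
Qed.

Lemma Q3_poly k : forall a b : F,
  (forall j : nat, (j <= 2 * k)%N -> a + j%:R != 0) ->
  (forall i : nat, (1 <= i <= k)%N -> (1/2 - i%:R - b) * (1/2 - i%:R + b) != 0) ->
  exists p : {poly F}, size p = (4 * k + 2)%N /\ forall n : F, p.[n] = Q3 k a b n.
Proof.
elim: k => [|k IH] a b ha hb; have a_nz : a != 0 by have := ha 0%N (leq0n _); rewrite addr0.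
  exists ((3/a)%:P * ('X + (a/3)%:P)); split=> [|n].
    by rewrite size_Cmul ?size_XaddC // mulf_neq0 // ?invr_eq0 // natr_nz.
  by rewrite !hornerE /=; field; rewrite a_nz natr_nz.
have [|i /andP[i_gt0 le_ik]|p [size_p p_Q3]] := IH (a + 1) b.
- by move=> j le_j2k; rewrite -addrA -mulrS ha //; lia.
- by apply: hb; rewrite i_gt0 ltnW.
apply: (Q3S_poly a_nz _ _ _ size_p p_Q3).
- by have := ha (2 * k.+1)%N (leqnn _); rewrite natrM addrC.
all: by have := hb k.+1 (leqnn _); rewrite mulf_eq0 negb_or => /andP[].
Qed.

End Polynomiality.

Theorem theorem8 (F : fieldType) (hchar : [pchar F] =i pred0)
  (k : nat) (a b : F)
  (ha : forall j : nat, (j <= 2 * k)%N -> a + j%:R != 0)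
  (hb : forall i : nat, (1 <= i <= k)%N ->
          (1/2 - i%:R - b) * (1/2 - i%:R + b) != 0)
  (hl1 : forall m : nat, 3/4 + k%:R/2 + a/2 + b/2 + m%:R != 0)
  (hl2 : forall m : nat, 3/4 + k%:R/2 + a/2 - b/2 + m%:R != 0) :
  (exists p : {poly F}, size p = (4 * k + 2)%N /\
      forall n : F, p.[n] = Q3 k a b n)
  /\
  (forall N : nat,
     fcomp (hyp32 (1/3 + 2 * k%:R/3 + a/3) (2/3 + 2 * k%:R/3 + a/3)
                  (1 + 2 * k%:R/3 + a/3)
                  (3/4 + k%:R/2 + a/2 + b/2) (3/4 + k%:R/2 + a/2 - b/2))
           (fmul (fmonX (-27)) (fbinom (-3) (-4))) N
     = fmul (fbinom (-1 - 2 * k%:R) 8)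
         (fmul (fbinom (1 + 2 * k%:R + a) (-4))
            (fun n : nat => poch a n * poch (1/2 - k%:R - b) n
                              * poch (1/2 - k%:R + b) n
                 / ((n`!)%:R * poch (3/4 + k%:R/2 + a/2 + b/2) n
                             * poch (3/4 + k%:R/2 + a/2 - b/2) n)
                 * Q3 k a b n%:R)) N).
Proof.
split; first exact: Q3_poly.
by move=> N; rewrite -[LHS]/(lhs k a b N) (lhs_eq_rhs hchar ha hb hl1 hl2).
Qed.
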